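(* For every positive integer $n$, $$n^2-1\ \Big|\ \sum_{k=0}^{n-1}\binom{n-1}{k}\binom{-n-1}{k}C_k3^{n-1-k}a(n,k),$$ where $$a(n,k)=4k^2n^2-8kn^3-14k^2n-14kn^2-4n^3+13k^2-11kn-26n^2+39k+4n+26.$$
   Context: $C_k=\binom{2k}{k}/(k+1)$; $\binom{x}{k}=x(x-1)\cdots(x-k+1)/k!$ for any integer $x$. Divisibility by $0$ means the quantity equals $0$. *)

From mathcomp Require Import all_boot all_order all_algebra.
Set Implicit Arguments. Unset Strict Implicit. Unset Printing Implicit Defensive.
Import Order.TTheory GRing.Theory Num.Theory.
Local Open Scope ring_scope.

(* Generalized binomial coefficient for integer x:
   binomz x k = x(x-1)...(x-k+1)/k!  (the division is exact). *)
Definition binomz (x : int) (k : nat) : int :=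
  ((\prod_(i < k) (x - i%:Z)) %/ (k`!)%:Z)%Z.

Definition catalan (k : nat) : nat := ('C(k.*2, k) %/ k.+1)%N.

Definition a_nk (n k : int) : int :=
  4*k^+2*n^+2 - 8*k*n^+3 - 14*k^+2*n - 14*k*n^+2 - 4*n^+3 + 13*k^+2
  - 11*k*n - 26*n^+2 + 39*k + 4*n + 26.

(* Each summand is already a multiple of n^2 - 1.  For natural numbers the
   generalized binomials are binom(n-1, k) = C(n-1, k) and
   binom(-n-1, k) = (-1)^k C(n+k, k); moreover n-1 divides k C(n-1, k) and
   n+1 divides k C(n+k, k).  Writing
     a(n,k) = A k^2 + B (n-1) k + 3 (n+1) k + D (n^2-1)
   with polynomial coefficients A, B, D in n, every term of
   C(n-1,k) C(n+k,k) a(n,k) then picks up a factor n-1 and a factor n+1. *)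

From mathcomp Require Import all_boot all_order all_algebra.
From mathcomp Require Import ring.
Import GRing.Theory Num.Theory.
Local Open Scope ring_scope.

Lemma prodz_sub_ffact (m k : nat) :
  \prod_(i < k) (m%:Z - i%:Z) = (m ^_ k)%:Z.
Proof.
elim: k => [|k IHk]; first by rewrite big_ord0 ffactn0.
rewrite big_ord_recr /= IHk ffactnSr.
have [le_km | lt_mk] := leqP k m; first by rewrite subzn.
by rewrite ffact_small // mul0r.
Qed.

Lemma prodz_opp_sub_ffact (n k : nat) :
  \prod_(i < k) (- n%:Z - 1 - i%:Z) = (-1) ^+ k * ((n + k) ^_ k)%:Z.
Proof.
elim: k => [|k IHk]; first by rewrite big_ord0 ffactn0 mulr1.
rewrite big_ord_recr /= IHk addnS ffactSS PoszM -[(n + k).+1]addn1 !PoszD exprS.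
ring.
Qed.

Lemma binomz_nat (m k : nat) : binomz m%:Z k = ('C(m, k))%:Z.
Proof.
by rewrite /binomz prodz_sub_ffact -bin_ffact PoszM mulzK // -lt0n fact_gt0.
Qed.

Lemma binomz_opp_subr1 (n k : nat) :
  binomz (- n%:Z - 1) k = (-1) ^+ k * ('C(n + k, k))%:Z.
Proof.
by rewrite /binomz prodz_opp_sub_ffact -bin_ffact PoszM mulrA mulzK // -lt0n fact_gt0.
Qed.

Lemma dvdn_mul_bin (m k : nat) : (m %| k * 'C(m, k))%N.
Proof.
case: k => [|k]; first by rewrite mul0n dvdn0.
by rewrite -mul_bin_diag dvdn_mulr.
Qed.

Lemma dvdn_mul_bin_addn (n k : nat) : (n.+1 %| k * 'C(n + k, k))%N.
Proof.
case: k => [|k]; first by rewrite mul0n dvdn0.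
by rewrite mul_bin_left addnS subSn ?leq_addl // addnK dvdn_mulr.
Qed.

Lemma dvdz_mul_a_nk (n k p q : int) :
  (n - 1 %| k * p)%Z -> (n + 1 %| k * q)%Z -> (n ^+ 2 - 1 %| p * q * a_nk n k)%Z.
Proof.
move=> dvd_kp dvd_kq.
have sqrB1 : n ^+ 2 - 1 = (n - 1) * (n + 1) by ring.
have dvd_kpkq : (n ^+ 2 - 1 %| (k * p) * (k * q))%Z by rewrite sqrB1 dvdz_mul.
have dvd_kq_n : (n ^+ 2 - 1 %| (n - 1) * (k * q))%Z by rewrite sqrB1 dvdz_mul.
have dvd_kp_n : (n ^+ 2 - 1 %| (n + 1) * (k * p))%Z
  by rewrite sqrB1 mulrC dvdz_mul.
have -> : p * q * a_nk n k =
    (4 * n ^+ 2 - 14 * n + 13) * ((k * p) * (k * q))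
    - (8 * n ^+ 2 + 22 * n + 36) * p * ((n - 1) * (k * q))
    + 3 * q * ((n + 1) * (k * p))
    - 2 * (2 * n + 13) * p * q * (n ^+ 2 - 1).
  by rewrite /a_nk; ring.
by rewrite !(rpredB, rpredD) //; apply: dvdz_mull; rewrite ?dvdzz.
Qed.

Theorem lemma3p3 (n : nat) (hn : (0 < n)%N) :
  ((n%:Z ^+ 2 - 1) %|
     \sum_(k < n) binomz (n.-1)%:Z k * binomz (- n%:Z - 1) k
        * (catalan k)%:Z * 3 ^+ (n.-1 - k) * a_nk n%:Z k%:Z)%Z.
Proof.
apply: rpred_sum => k _.
rewrite binomz_nat binomz_opp_subr1.
have n_subr1 : n%:Z - 1 = (n.-1)%:Z by rewrite -{1}(prednK hn) -addn1 PoszD addrK.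
have n_addr1 : n%:Z + 1 = (n.+1)%:Z by rewrite -addn1 PoszD.
have dvd_term : (n%:Z ^+ 2 - 1 %|
                 ('C(n.-1, k))%:Z * ('C(n + k, k))%:Z * a_nk n%:Z k%:Z)%Z.
  apply: dvdz_mul_a_nk; rewrite ?n_subr1 ?n_addr1.
  - exact: dvdn_mul_bin.
  - exact: dvdn_mul_bin_addn.
have := dvdz_mull ((-1) ^+ k * (catalan k)%:Z * 3 ^+ (n.-1 - k)) dvd_term.
by congr (_ %| _)%Z; ring.
Qed.
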